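(* Let $m>1$ and $a\in\mathbb{Z}_m$ with $2a^2-2a+1\equiv0\pmod m$, let $x\cdot y=ax+(1-a)y$ and $x\circ y=(1-a)x+ay$ on $\mathbb{Z}_m$. Then for $1\le k<m$, $(\mathbb{Z}_m,\cdot)$ is $k$-translatable if and only if $(\mathbb{Z}_m,\circ)$ is $(m-k)$-translatable (both with respect to the ordering $0,1,\dots,m-1$).
   Context: $(\mathbb{Z}_m,\cdot)$ is a quadratical quasigroup and $(\mathbb{Z}_m,\circ)$ is its dual ($x\circ y=y\cdot x$). A finite groupoid with ordering $q_1,\dots,q_n$ is $k$-translatable ($1\le k<n$) with respect to this ordering if $q_i\cdot q_j=q_{i-1}\cdot q_{j-k}$ for all $i\in\{2,\dots,n\}$, $j\in\{1,\dots,n\}$, indices taken modulo $n$ in $\{1,\dots,n\}$. *)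

From mathcomp Require Import all_boot all_algebra.
Set Implicit Arguments. Unset Strict Implicit. Unset Printing Implicit Defensive.
Import GRing.Theory.
Local Open Scope ring_scope.

Definition idx_mod (n : nat) (i : int) : nat :=
  (absz ((i - 1) %% n)%Z).+1.

Definition k_translatable (T : Type) (op : T -> T -> T) (n : nat)
    (q : nat -> T) (k : nat) : Prop :=
  (1 <= k < n)%N /\
  forall i j : nat, (2 <= i <= n)%N -> (1 <= j <= n)%N ->
    op (q i) (q j) =
    op (q (idx_mod n (i%:Z - 1))) (q (idx_mod n (j%:Z - k%:Z))).

Definition std_order (m : nat) (i : nat) : 'Z_m := (i.-1)%:R.

Definition qdot (m : nat) (a : 'Z_m) (x y : 'Z_m) : 'Z_m := a * x + (1 - a) * y.
Definition qcirc (m : nat) (a : 'Z_m) (x y : 'Z_m) : 'Z_m := (1 - a) * x + a * y.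

From mathcomp Require Import all_boot all_algebra ring zify.
Local Open Scope ring_scope.
Import GRing.Theory.

(* Both groupoids are affine, x y = b x + c y, and an affine groupoid on Z_m
   is k-translatable for the ordering 0, 1, ..., m-1 exactly when b + c k = 0.
   For x . y this reads a + (1 - a) k = 0; for the dual, since m - k = -k, it
   reads (1 - a) - a k = 0.  The quadratical condition says a^2 + (1 - a)^2 = 0,
   which yields (1 - a) (a + (1 - a) k) = a ((1 - a) - a k) and 2 a (1 - a) = 1;
   so a and 1 - a are cancellable and the two conditions are equivalent. *)

Lemma intr_modz (R : pzRingType) (m : nat) (z : int) :
  m%:R = 0 :> R -> ((z %% m)%Z)%:~R = z%:~R :> R.
Proof.
move=> m0; rewrite {2}(divz_eq z m) [in RHS]intrD intrM.
by rewrite -[(m%:Z)%:~R]pmulrn m0 mulr0 add0r.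
Qed.

Section StdOrder.

Variable m : nat.
Hypothesis m_gt1 : (1 < m)%N.

Lemma std_order_idx_mod (t : int) :
  std_order m (idx_mod m t) = (t - 1)%:~R.
Proof.
have m_neq0 : m%:Z != 0 by rewrite eqz_nat -lt0n ltnW.
rewrite /std_order /idx_mod /= -(intr_modz _ _ _ (pchar_Zp m_gt1)).
by case: ((t - 1) %% m)%Z (modz_ge0 (t - 1) m_neq0).
Qed.

Lemma std_order_idx_mod_sub (i : nat) (s : int) : (0 < i)%N ->
  std_order m (idx_mod m (i%:Z - s)) = std_order m i - s%:~R.
Proof.
case: i => // i _; rewrite std_order_idx_mod /std_order /=.
by rewrite addrAC -[i.+1]addn1 PoszD addrK intrB -pmulrn.
Qed.

Lemma k_translatable_affine (b c : 'Z_m) (k : nat) :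
  k_translatable (fun x y => b * x + c * y) m (@std_order m) k <->
  (1 <= k < m)%N /\ b + c * k%:R = 0.
Proof.
rewrite /k_translatable; split=> -[k_range transl]; split=> //.
  have := transl 2%N 1%N m_gt1 (ltnW m_gt1).
  rewrite !std_order_idx_mod_sub // /std_order /=.
  rewrite -!pmulrn subrr mulr1 !mulr0 addr0 add0r sub0r mulrN => ->.
  exact: addNr.
move=> i j /andP[i_gt1 _] /andP[j_gt0 _].
rewrite !std_order_idx_mod_sub ?(ltnW i_gt1) // -!pmulrn.
have -> : b * (std_order m i - 1) + c * (std_order m j - k%:R) =
          b * std_order m i + c * std_order m j - (b + c * k%:R) by ring.
by rewrite transl subr0.
Qed.

End StdOrder.

Section QuadraticalParameter.

Variables (R : comPzRingType) (a : R).
Hypothesis quadratical : 2 * a ^+ 2 - 2 * a + 1 = 0.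

Lemma mul2_subr_eq1 : 2 * a * (1 - a) = 1.
Proof. by rewrite -[RHS]subr0 -quadratical; ring. Qed.

Lemma lreg_quadratical : GRing.lreg a.
Proof.
apply: (can_inj (g := fun y => 2 * (1 - a) * y)) => x.
by rewrite mulrA [_ * a]mulrAC mul2_subr_eq1 mul1r.
Qed.

Lemma lreg_quadratical_subr : GRing.lreg (1 - a).
Proof.
apply: (can_inj (g := fun y => 2 * a * y)) => x.
by rewrite mulrA mul2_subr_eq1 mul1r.
Qed.

Lemma translation_condition_dual (K : R) :
  a + (1 - a) * K = 0 <-> (1 - a) - a * K = 0.
Proof.
have dual : (1 - a) * (a + (1 - a) * K) = a * ((1 - a) - a * K).
  rewrite -[RHS]addr0 -(mulr0 K) -quadratical; ring.
rewrite !(rwP eqP) -(mulrI_eq0 _ lreg_quadratical_subr) dual.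
by rewrite (mulrI_eq0 _ lreg_quadratical).
Qed.

End QuadraticalParameter.

Theorem theorem9p4 (m : nat) (a : 'Z_m) (k : nat) :
  (1 < m)%N ->
  2 * a ^+ 2 - 2 * a + 1 = 0 ->
  (1 <= k < m)%N ->
  (k_translatable (qdot a) m (@std_order m) k <->
   k_translatable (qcirc a) m (@std_order m) (m - k)).
Proof.
move=> m_gt1 quadratical k_range.
have k_le_m : (k <= m)%N by lia.
have dual_range : (1 <= m - k < m)%N by lia.
have m_sub_k : (m - k)%:R = - k%:R :> 'Z_m by rewrite natrB // pchar_Zp // sub0r.
rewrite /qdot /qcirc !k_translatable_affine // m_sub_k mulrN.
rewrite translation_condition_dual //.
by split=> -[_ cond].
Qed.
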